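(* Let $(M,\mathcal F)$ be transversely Hessian with foliated Hessian structure $(D,g)$ and second normal Koszul form $\beta$. For any adapted foliated affine coordinate system $(x^1,\dots,x^p,y^1,\dots,y^q)$, let $\mathbf R^N_{i\bar j}$ ($i,j=1,\dots,q$) be the components of the normal Ricci tensor of the normal Kählerian metric $g^N$ of the foliated manifold $(N(M,\mathcal F),\mathcal F^N)$ with respect to the complex coordinates $z^i,\bar z^j$. Then $\mathbf R^N_{i\bar j}=-\frac12\beta_{ij}\circ\pi$, where $\pi:N(M,\mathcal F)\to M$ is the projection.
   Context: $N(M,\mathcal F)=TM/T\mathcal F$, $\mathcal F$ of codimension $q$. $(D,g)$: $D$ a flat torsion-free foliated connection in the normal bundle (adapted foliated affine coordinates: adapted charts with affine transverse coordinate changes and $\overline{\partial/\partial y^i}$ $D$-parallel), $g$ a foliated metric in the normal bundle with locally $g_{ij}=\partial^2h/\partial y^i\partial y^j$, $h$ a function of $y$ only. Normal volume form $\omega=(\det g_{kl})^{1/2}dy^1\wedge\dots\wedge dy^q$; first Koszul form $\alpha$: $D_X\omega=\alpha(X)\omega$; second Koszul form $\beta=D\alpha$, $\beta_{ij}=\partial\alpha_i/\partial y^j$. On $N(M,\mathcal F)$ with fibre coordinates $\xi^i=dy^i$, $\mathcal F^N$ has plaques $\{(y,\xi)=\mathrm{const}\}$, $z^i=y^i+\sqrt{-1}\xi^i$ are transversely holomorphic coordinates and $g^N=\sum(g_{ij}\circ\pi)dz^id\bar z^j$ is a foliated Kähler metric; its normal Ricci tensor is the Ricci tensor of the corresponding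 transverse Kähler metric. *)

From mathcomp Require Import all_boot all_algebra.
From mathcomp Require Import all_classical all_reals all_analysis.
From mathcomp Require Import complex.
Set Implicit Arguments. Unset Strict Implicit. Unset Printing Implicit Defensive.
Import GRing.Theory Num.Theory.
Local Open Scope ring_scope.
Local Open Scope complex_scope.

(* Local (chart-level) setting: transverse affine coordinates y = (y^1..y^q)
   ranging over an open set U of R^q; fibre coordinates xi = (xi^1..xi^q) of
   the normal bundle; complex coordinates z^i = y^i + sqrt(-1) xi^i. *)

Definition Rq (R : realType) (q : nat) : normedModType R := 'rV[R]_q.

Definition ev {R : realType} {q : nat} (k : 'I_q) : Rq R q :=
  \row_(l < q) (l == k)%:R.

Definition pd {R : realType} {q : nat} (k : 'I_q) (f : Rq R q -> R) : Rq R q -> R :=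
  fun y => 'D_(ev k) f y.

Fixpoint iterD {R : realType} {q : nat} (vs : seq (Rq R q)) (f : Rq R q -> R)
  : Rq R q -> R :=
  match vs with
  | [::] => f
  | v :: vs' => fun y => 'D_v (iterD vs' f) y
  end.

Definition smooth_on {R : realType} {q : nat} (U : set (Rq R q)) (f : Rq R q -> R) :=
  forall (vs : seq (Rq R q)) (y : Rq R q), U y -> differentiable (iterD vs f) y.

Definition posdef {R : realType} {q : nat} (G : 'M[R]_q) :=
  G^T = G /\ forall v : 'rV[R]_q, v != 0 -> 0 < (v *m G *m v^T) 0 0.

Definition hess_metric {R : realType} {q : nat} (h : Rq R q -> R) (y : Rq R q)
  : 'M[R]_q := \matrix_(i, j) pd j (pd i h) y.

(* normal volume form omega = (det g)^{1/2} dy^1 /\ ... /\ dy^q : its density *)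
Definition normal_volume_density {R : realType} {q : nat} (h : Rq R q -> R)
  (y : Rq R q) : R := Num.sqrt (\det (hess_metric h y)).

(* first Koszul form alpha, D_X omega = alpha(X) omega.  Since the coordinate
   fields are D-parallel (D flat in affine coordinates),
   D_{d/dy^i} (rho dy^1/\../\dy^q) = (d rho/dy^i) dy^1/\../\dy^q, so
   alpha_i is determined by alpha_i * rho = d rho / dy^i. *)
Definition first_koszul {R : realType} {q : nat} (h : Rq R q -> R)
  (y : Rq R q) (i : 'I_q) : R :=
  pd i (normal_volume_density h) y / normal_volume_density h y.

(* second Koszul form beta = D alpha, beta_ij = d alpha_i / d y^j *)
Definition second_koszul {R : realType} {q : nat} (h : Rq R q -> R)
  (y : Rq R q) (i j : 'I_q) : R :=
  pd j (fun y' => first_koszul h y' i) y.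

Definition pdy {R : realType} {q : nat} (k : 'I_q) (F : Rq R q -> Rq R q -> R)
  : Rq R q -> Rq R q -> R := fun y xi => pd k (fun y' => F y' xi) y.
Definition pdxi {R : realType} {q : nat} (k : 'I_q) (F : Rq R q -> Rq R q -> R)
  : Rq R q -> Rq R q -> R := fun y xi => pd k (fun xi' => F y xi') xi.

(* d^2 F / dz^i d zbar^j for a real-valued F(y, xi), with
   d/dz^i = (d/dy^i - sqrt(-1) d/dxi^i)/2, d/dzbar^j = (d/dy^j + sqrt(-1) d/dxi^j)/2:
   d/dz^i (d/dzbar^j F)
     = 1/4 [ F_{y^j y^i} + F_{xi^j xi^i} + sqrt(-1) (F_{xi^j y^i} - F_{y^j xi^i}) ]
   (F_{a b} meaning d/db (d/da F)). *)
Definition dz_dzbar {R : realType} {q : nat} (i j : 'I_q)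
  (F : Rq R q -> Rq R q -> R) (y xi : Rq R q) : R[i] :=
  (4^-1)%:C *
  ((pdy i (pdy j F) y xi + pdxi i (pdxi j F) y xi)%:C
   + 'i%C * (pdy i (pdxi j F) y xi - pdxi i (pdy j F) y xi)%:C).

(* Ricci tensor of a Kaehler metric with components G_{k lbar}(z):
   R_{i jbar} = - d^2 log det (G_{k lbar}) / dz^i dzbar^j.
   (det of the Hermitian matrix G is real; we take the log of its real part.) *)
Definition kahler_ricci {R : realType} {q : nat}
  (G : Rq R q -> Rq R q -> 'M[R[i]]_q) (i j : 'I_q) (y xi : Rq R q) : R[i] :=
  - dz_dzbar i j (fun y' xi' => ln (complex.Re (\det (G y' xi')))) y xi.

(* normal Kaehler metric g^N = sum (g_ij o pi) dz^i dzbar^j on N(M,F),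
   in the coordinates (y, xi); pi (y, xi) = y. *)
Definition normal_kahler_metric {R : realType} {q : nat} (h : Rq R q -> R)
  (y xi : Rq R q) : 'M[R[i]]_q :=
  \matrix_(k, l) ((hess_metric h y) k l)%:C.

From Pilot Require Import Defs.
From mathcomp Require Import all_boot all_algebra.
From mathcomp Require Import all_classical all_reals all_analysis.
From mathcomp Require Import complex ring lra.
Import order.Order.TTheory GRing.Theory Num.Theory.

Set Implicit Arguments.
Unset Strict Implicit.
Unset Printing Implicit Defensive.

(* In adapted affine coordinates the normal Kaehler metric has coefficients
   g_ij(y), independent of the fibre coordinates xi, so
   log det g^N = log det g =: L(y) and d^2/dz^i dzbar^j reduces to
   (1/4) d_i d_j L.  On the other side omega has density (det g)^(1/2), hence
   alpha = (1/2) dL and beta_ij = (1/2) d_j d_i L.  The two differ only in the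
   order of differentiation, which Schwarz's theorem settles; positive
   definiteness and smoothness of g make det g positive and twice
   differentiable, so that all these derivatives exist. *)

Local Open Scope ring_scope.
Local Open Scope classical_set_scope.

Section NearDifferentiable.
Context {R : realType} {V W : normedModType R}.

Lemma near_eq_differentiable (f g : V -> W) (x : V) :
  (\forall y \near x, f y = g y) -> differentiable f x -> differentiable g x.
Proof.
move=> fg df; have fgx : f x = g x := nbhs_singleton fg.
have fg0 : \forall h \near (0 : V), f (h + x) = g (h + x).
  by rewrite (near_shift x) /=; near=> y; rewrite /= sub0r subrK; near: y.
have small_o : g \o shift x = cst (g x) + 'd f x +o_ (0 : V) id.
  apply/eqaddoP => _ /posnumP[e]; near=> h.
  rewrite -[_ h]/(g (h + x) - (g x + 'd f x h)) -(near fg0 h) // -fgx.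
  near: h; exact: (eqaddoP _ _ _ _).1 (diff_locally df) _ (gt0 e).
have dgE : 'd g x = 'd f x :> (V -> W) by apply: diff_unique => //; exact: diff_continuous.
by apply/diff_locallyP; rewrite dgE; split => //; exact: diff_continuous.
Unshelve. all: by end_near. Qed.

End NearDifferentiable.

Section Schwarz.
Context {R : realType} {V : normedModType R}.
Implicit Types (f : V -> R) (y u v a b : V).

Definition second_diff f y a b := f (y + a + b) - f (y + a) - f (y + b) + f y.

Lemma second_diffC f y a b : second_diff f y a b = second_diff f y b a.
Proof. by rewrite /second_diff [y + b + a]addrAC; ring. Qed.

Lemma is_derive_line f u w (s : R) :
  derivable f (s *: u + w) u ->
  is_derive s 1 (fun r : R => f (r *: u + w)) ('D_u f (s *: u + w)).
Proof.
move=> df.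
have E : (fun h : R => h^-1 *: (f ((h *: (1 : R) + s) *: u + w) - f (s *: u + w)))
       = (fun h : R => h^-1 *: (f (h *: u + (s *: u + w)) - f (s *: u + w))).
  by apply/funext => h; rewrite [h *: (1 : R)]mulr1 scalerDl addrA.
by split; rewrite /derivable /derive /= E.
Qed.

(* Mean value theorem along the segment s |-> y + s u + t v, followed by the
   first-order expansion of 'D_u f at y. *)
Lemma second_diff_approx f y u v (e d t : R) :
  0 <= e -> 0 < t -> t * (`|u| + `|v|) < d ->
  (forall h, `|h| < d -> derivable f (y + h) u) ->
  (forall h, `|h| < d ->
     `|'D_u f (y + h) - ('D_u f y + 'd ('D_u f) y h)| <= e * `|h|) ->
  `|second_diff f y (t *: v) (t *: u) - t ^+ 2 * 'd ('D_u f) y v|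
    <= 2 * e * t ^+ 2 * (`|u| + `|v|).
Proof.
move=> e0 t0 tK Du Dlin; set L := 'd ('D_u f) y; set K := `|u| + `|v|.
pose phi s := f (s *: u + (y + t *: v)) - f (s *: u + y).
pose dphi s := 'D_u f (s *: u + (y + t *: v)) - 'D_u f (s *: u + y).
have seg_norm s : 0 <= s <= t -> `|s *: u + t *: v| <= t * K /\ `|s *: u| <= t * K.
  move=> /andP[s0 st]; have su : `|s *: u| <= t * `|u|.
    by rewrite normrZ ger0_norm // ler_wpM2r.
  split; last by rewrite (le_trans su) // ler_pM2l // /K lerDl.
  rewrite (le_trans (ler_normD _ _)) // mulrDr; apply: lerD => //.
  by rewrite normrZ (ger0_norm (ltW t0)).
have phi' r : 0 <= r <= t -> is_derive r 1 phi (dphi r).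
  move=> rt; have [h1 h2] := seg_norm r rt.
  apply: is_deriveB; apply: is_derive_line.
    by rewrite addrCA; apply: Du; exact: le_lt_trans tK.
  by rewrite addrC; apply: Du; exact: le_lt_trans tK.
have [c] : exists2 c, c \in `]0, t[%R & phi t - phi 0 = dphi c * (t - 0).
  apply: (@MVT R phi dphi) => // [r|].
    by rewrite in_itv /= => /andP[? ?]; apply: phi'; rewrite !ltW.
  apply: derivable_within_continuous => s; rewrite in_itv /= => st.
  by have [] := phi' s st.
rewrite in_itv /= => /andP[c0 ct] phiE.
have cc : 0 <= c <= t by rewrite !ltW.
have -> : second_diff f y (t *: v) (t *: u) = phi t - phi 0.
  by rewrite /second_diff /phi !scale0r !add0r [y + t *: v + _]addrC [y + t *: u]addrC; ring.
rewrite phiE subr0.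
have -> : dphi c * t - t ^+ 2 * L v = t * (dphi c - t * L v) by ring.
have -> : 2 * e * t ^+ 2 * K = t * (e * (t * K) + e * (t * K)) by ring.
rewrite normrM (ger0_norm (ltW t0)) ler_pM2l //.
have LD : L (c *: u + t *: v) = L (c *: u) + t * L v.
  by rewrite raddfD; congr (_ + _); exact: linearZZ.
have -> : dphi c - t * L v
    = ('D_u f (y + (c *: u + t *: v)) - ('D_u f y + L (c *: u + t *: v)))
    - ('D_u f (y + c *: u) - ('D_u f y + L (c *: u))).
  by rewrite LD /dphi addrCA [c *: u + y]addrC; ring.
have bound w : `|w| <= t * K -> `|'D_u f (y + w) - ('D_u f y + L w)| <= e * (t * K).
  by move=> wK; apply: le_trans (Dlin _ (le_lt_trans wK tK)) _; apply: ler_wpM2l.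
have [h1 h2] := seg_norm c cc.
exact: le_trans (ler_normB _ _) (lerD (bound _ h1) (bound _ h2)).
Qed.

Lemma approx_close (D A B M c : R) : 0 <= c ->
  `|D - c * A| <= M -> `|D - c * B| <= M -> c * `|A - B| <= M + M.
Proof.
move=> c0 hA hB; rewrite -(ger0_norm c0) -normrM.
have -> : c * (A - B) = (D - c * B) - (D - c * A) by ring.
exact: le_trans (ler_normB _ _) (lerD hB hA).
Qed.

Lemma schwarz f y u v :
  (\forall z \near y, derivable f z u) -> (\forall z \near y, derivable f z v) ->
  differentiable ('D_u f) y -> differentiable ('D_v f) y ->
  'D_v ('D_u f) y = 'D_u ('D_v f) y.
Proof.
move=> Du Dv du dv; rewrite (deriveE _ du) (deriveE _ dv).
pose K := `|u| + `|v|; have K0 : 0 <= K by rewrite addr_ge0.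
suff close e : 0 < e -> `|'d ('D_u f) y v - 'd ('D_v f) y u| <= e * (4 * K).
  apply/eqP; rewrite -subr_eq0 -normr_le0; apply/ler_addgt0Pr => e e0.
  have K1 : 0 < 4 * K + 1 by rewrite ltr_wpDl // mulr_ge0.
  rewrite add0r (le_trans (close _ (divr_gt0 e0 K1))) // mulrAC ler_pdivrMr //.
  by rewrite ler_pM2l // lerDl.
move=> e0.
have expand w : differentiable ('D_w f) y -> \forall h \near (0 : V),
    `|'D_w f (y + h) - ('D_w f y + 'd ('D_w f) y h)| <= e * `|h|.
  move=> dw; apply: filterS ((eqaddoP _ _ _ _).1 (diff_locally dw) e e0) => h.
  by rewrite [y + h]addrC.
have : \forall h \near (0 : V), [/\ derivable f (y + h) u, derivable f (y + h) v,
    `|'D_u f (y + h) - ('D_u f y + 'd ('D_u f) y h)| <= e * `|h| &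
    `|'D_v f (y + h) - ('D_v f y + 'd ('D_v f) y h)| <= e * `|h|].
  have [N1 N2] := ((nbhs0P _ _).1 Du, (nbhs0P _ _).1 Dv).
  by apply: filterS (filterI (filterI N1 N2) (filterI (expand _ du) (expand _ dv))) => h [[? ?] [? ?]].
move=> /nbhs_norm0P [d /= d0 near_y].
pose t := d / (K + 1) / 2.
have t0 : 0 < t by rewrite !divr_gt0 // ltr_wpDl.
have tK : t * K < d.
  rewrite (@le_lt_trans _ _ (t * (K + 1))) ?ler_pM2l ?lerDl //.
  by rewrite /t mulrAC divfK ?gt_eqF ?ltr_wpDl // ltr_pdivrMr // ltr_pMr // ltr1n.
have tK' : t * (`|v| + `|u|) < d by rewrite addrC.
have Hu := second_diff_approx (ltW e0) t0 tK
  (fun h hd => let: And4 x _ _ _ := near_y h hd in x)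
  (fun h hd => let: And4 _ _ x _ := near_y h hd in x).
have Hv := second_diff_approx (ltW e0) t0 tK'
  (fun h hd => let: And4 _ x _ _ := near_y h hd in x)
  (fun h hd => let: And4 _ _ _ x := near_y h hd in x).
rewrite second_diffC [`|v| + _]addrC in Hv.
have t2 : 0 < t ^+ 2 by rewrite exprn_gt0.
rewrite -(ler_pM2l t2).
have -> : t ^+ 2 * (e * (4 * K)) = 2 * e * t ^+ 2 * K + 2 * e * t ^+ 2 * K by ring.
exact: approx_close (ltW t2) Hu Hv.
Unshelve. all: by end_near. Qed.

End Schwarz.

Lemma row_sqnorm_gt0 (R : realDomainType) n (v : 'rV[R]_n) :
  v != 0 -> 0 < (v *m v^T) 0 0.
Proof.
move=> v0; have [k vk] : exists k, v 0 k != 0.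
  apply/existsP; apply: contraR v0 => /existsPn v0.
  by apply/eqP/matrixP => a b; rewrite ord1 mxE; exact/eqP/negbNE/v0.
rewrite mxE (bigD1 k) //= ltr_pwDl //.
  by rewrite mxE -expr2 exprn_even_gt0 // vk orbT.
by apply: sumr_ge0 => a _; rewrite mxE -expr2 sqr_ge0.
Qed.

Lemma det_convex_id_neq0 (R : realFieldType) n (G : 'M[R]_n) (c : R) :
  (forall v : 'rV[R]_n, v != 0 -> 0 < (v *m G *m v^T) 0 0) -> 0 <= c <= 1 ->
  \det (c *: 1%:M + (1 - c) *: G) != 0.
Proof.
move=> Gpos c01; apply/negP => /det0P[w w0 wM].
have : 0 < (w *m (c *: 1%:M + (1 - c) *: G) *m w^T) 0 0.
  rewrite mulmxDr -!scalemxAr mulmx1 mulmxDl -!scalemxAl mxE [X in X + _]mxE [X in _ + X]mxE.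
  move: (row_sqnorm_gt0 w0) (Gpos _ w0) c01.
  set a := (w *m w^T) 0 0; set b := (w *m G *m w^T) 0 0 => a0 b0 /andP[c0 c1].
  nra.
by rewrite wM mul0mx mxE ltxx.
Qed.

(* A homotopy to the identity inside the positive definite matrices, along
   which the (polynomial, hence continuous) determinant never vanishes. *)
Lemma posdef_det_gt0 (R : realType) n (G : 'M[R]_n) :
  (forall v : 'rV[R]_n, v != 0 -> 0 < (v *m G *m v^T) 0 0) -> 0 < \det G.
Proof.
move=> Gpos.
pose P : 'M[{poly R}]_n := 'X *: 1%:M + (1 - 'X) *: map_mx polyC G.
pose p := horner (\det P).
have pE c : p c = \det (c *: 1%:M + (1 - c) *: G).
  rewrite /p -horner_evalE -det_map_mx; congr (\det _).
  by apply/matrixP => a b; rewrite !mxE /= horner_evalE !hornerE; case: (a == b); rewrite ?hornerE.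
have p0 : p 0 = \det G by rewrite pE scale0r add0r subr0 scale1r.
have p1 : p 1 = 1 by rewrite pE scale1r subrr scale0r addr0 det1.
rewrite -p0; case: (ltrP 0 (p 0)) => // p0le.
have p_cont : {within `[0, 1], continuous p}.
  by apply: continuous_subspaceT => x; exact: continuous_horner.
have [|c] := @IVT R p 0 1 0 ler01 p_cont.
  by rewrite p1 ge_min p0le /= le_max ler01 orbT.
rewrite in_itv /= => c01 pc0.
by have := det_convex_id_neq0 Gpos c01; rewrite -pE pc0 eqxx.
Qed.

Section TwiceDifferentiable.
Context {R : realType} {V : normedModType R} (U : set V).
Hypothesis oU : open U.

Definition twice_differentiable_on (f : V -> R) :=
  forall z, U z -> differentiable f z /\ forall w, differentiable ('D_w f) z.

Lemma twice_differentiable_cst (k : R) : twice_differentiable_on (fun=> k).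
Proof.
move=> z Uz; split=> [|w]; first exact: differentiable_cst.
rewrite (_ : 'D_w _ = fun=> 0); first exact: differentiable_cst.
by apply/funext => x; exact: derive_cst.
Qed.

Lemma twice_differentiableD f g : twice_differentiable_on f ->
  twice_differentiable_on g -> twice_differentiable_on (fun z => f z + g z).
Proof.
move=> Cf Cg z Uz; have [df dDf] := Cf z Uz; have [dg dDg] := Cg z Uz.
split=> [|w]; first exact: differentiableD.
apply: (@near_eq_differentiable _ _ _ (fun x => 'D_w f x + 'D_w g x)).
  near=> x; have Ux : U x by near: x; exact: open_nbhs_nbhs.
  have [[dfx _] [dgx _]] := (Cf x Ux, Cg x Ux).
  by rewrite -(deriveD (diff_derivable dfx) (diff_derivable dgx)).
exact: differentiableD.
Unshelve. all: by end_near. Qed.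

Lemma twice_differentiableM f g : twice_differentiable_on f ->
  twice_differentiable_on g -> twice_differentiable_on (fun z => f z * g z).
Proof.
move=> Cf Cg z Uz; have [df dDf] := Cf z Uz; have [dg dDg] := Cg z Uz.
split=> [|w]; first exact: differentiableM.
apply: (@near_eq_differentiable _ _ _ (fun x => f x * 'D_w g x + g x * 'D_w f x)).
  near=> x; have Ux : U x by near: x; exact: open_nbhs_nbhs.
  have [[dfx _] [dgx _]] := (Cf x Ux, Cg x Ux).
  by rewrite -(deriveM (diff_derivable dfx) (diff_derivable dgx)).
by apply: differentiableD; apply: differentiableM.
Unshelve. all: by end_near. Qed.

Lemma twice_differentiable_sum (I : Type) (r : seq I) (F : I -> V -> R) :
  (forall i, twice_differentiable_on (F i)) ->
  twice_differentiable_on (fun z => \sum_(i <- r) F i z).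
Proof.
move=> CF; elim: r => [|a r IH].
  by under eq_fun do rewrite big_nil; exact: twice_differentiable_cst.
by under eq_fun do rewrite big_cons; exact: twice_differentiableD.
Qed.

Lemma twice_differentiable_prod (I : Type) (r : seq I) (F : I -> V -> R) :
  (forall i, twice_differentiable_on (F i)) ->
  twice_differentiable_on (fun z => \prod_(i <- r) F i z).
Proof.
move=> CF; elim: r => [|a r IH].
  by under eq_fun do rewrite big_nil; exact: twice_differentiable_cst.
by under eq_fun do rewrite big_cons; exact: twice_differentiableM.
Qed.

Lemma twice_differentiable_det n (A : V -> 'M[R]_n) :
  (forall k l, twice_differentiable_on (fun z => A z k l)) ->
  twice_differentiable_on (fun z => \det (A z)).
Proof.
move=> CA; apply: twice_differentiable_sum => s.
apply: twice_differentiableM; first exact: twice_differentiable_cst.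
by apply: twice_differentiable_prod => k; exact: CA.
Qed.

End TwiceDifferentiable.

Lemma derive_comp_real {R : realType} {V : normedModType R} (f : V -> R)
    (phi : R -> R) (z w : V) (dphi : R) :
  differentiable f z -> is_derive (f z) 1 phi dphi ->
  'D_w (phi \o f) z = 'D_w f z * dphi.
Proof.
move=> df dphiE; have dp := (derivable1_diffP phi (f z)).1 (@ex_derive _ _ _ _ _ _ _ dphiE).
rewrite deriveE; last exact: differentiable_comp.
by rewrite diff_comp // (deriveE _ df) /= diff1E // derive1E derive_val.
Qed.

Section LogDerivative.
Context {R : realType} {V : normedModType R} (U : set V) (D : V -> R).
Hypotheses (oU : open U) (D2 : twice_differentiable_on U D)
  (D_gt0 : forall z, U z -> 0 < D z).

Lemma differentiable_ln_comp z : U z -> differentiable (fun x => ln (D x)) z.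
Proof.
move=> Uz; have dln := (derivable1_diffP (@ln R) (D z)).1
  (@ex_derive _ _ _ _ _ _ _ (is_derive1_ln (D_gt0 Uz))).
exact: differentiable_comp (D2 Uz).1 dln.
Qed.

Lemma derive_ln_comp z w : U z -> 'D_w (fun x => ln (D x)) z = 'D_w D z / D z.
Proof.
by move=> Uz; rewrite (derive_comp_real w (D2 Uz).1 (is_derive1_ln (D_gt0 Uz))).
Qed.

Lemma derive_sqrt_comp_div z w : U z ->
  'D_w (fun x => Num.sqrt (D x)) z / Num.sqrt (D z)
  = 2^-1 * 'D_w (fun x => ln (D x)) z.
Proof.
move=> Uz; rewrite derive_ln_comp //.
rewrite (derive_comp_real w (D2 Uz).1 (is_derive1_sqrt (D_gt0 Uz))).
have s0 : Num.sqrt (D z) != 0 by rewrite gt_eqF // sqrtr_gt0 D_gt0.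
rewrite -{3}(sqr_sqrtr (ltW (D_gt0 Uz))); field.
by rewrite s0.
Qed.

Lemma differentiable_derive_ln_comp y w : U y ->
  differentiable ('D_w (fun x => ln (D x))) y.
Proof.
move=> Uy; apply: (@near_eq_differentiable _ _ _ (fun z => 'D_w D z / D z)).
  near=> z; rewrite derive_ln_comp //; near: z; exact: open_nbhs_nbhs.
apply: differentiableM; first exact: (D2 Uy).2.
by apply: differentiableV; [exact: (D2 Uy).1 | rewrite gt_eqF // D_gt0].
Unshelve. all: by end_near. Qed.

Lemma derive_ln_compC y u v : U y ->
  'D_v ('D_u (fun x => ln (D x))) y = 'D_u ('D_v (fun x => ln (D x))) y.
Proof.
move=> Uy; have near_derivable w : \forall z \near y, derivable (fun x => ln (D x)) z w.
  near=> z; apply/diff_derivable/differentiable_ln_comp.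
  near: z; exact: open_nbhs_nbhs.
apply: schwarz; [exact: near_derivable | exact: near_derivable |
  exact: differentiable_derive_ln_comp..].
Unshelve. all: by end_near. Qed.

End LogDerivative.

Local Open Scope complex_scope.

Definition log_det_hess {R : realType} {q : nat} (h : Rq R q -> R) (y : Rq R q) : R :=
  ln (\det (hess_metric h y)).

Section HessianKoszul.
Context {R : realType} {q : nat} (U : set (Rq R q)) (h : Rq R q -> R).
Hypotheses (oU : open U) (h_smooth : smooth_on U h)
  (h_posdef : forall y, U y -> posdef (hess_metric h y)).

Lemma twice_differentiable_det_hess :
  twice_differentiable_on U (fun y => \det (hess_metric h y)).
Proof.
apply: twice_differentiable_det => // k l z Uz.
have -> : (fun y => hess_metric h y k l) = Defs.iterD [:: ev l; ev k] h.
  by apply/funext => y; rewrite mxE.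
by split=> [|w]; [exact: (h_smooth [:: _; _]) | exact: (h_smooth [:: _; _; _])].
Qed.

Lemma det_hess_gt0 y : U y -> 0 < \det (hess_metric h y).
Proof. by move=> Uy; apply: posdef_det_gt0; exact: (h_posdef Uy).2. Qed.

Lemma first_koszulE y i : U y -> first_koszul h y i = 2^-1 * pd i (log_det_hess h) y.
Proof.
exact: (derive_sqrt_comp_div twice_differentiable_det_hess det_hess_gt0).
Qed.

Lemma second_koszulE y i j : U y ->
  second_koszul h y i j = 2^-1 * pd j (pd i (log_det_hess h)) y.
Proof.
move=> Uy; rewrite /second_koszul /pd.
rewrite (@near_eq_derive _ _ _ _ (fun z => 2^-1 *: 'D_(ev i) (log_det_hess h) z)).
  apply: deriveZ; apply: diff_derivable.
  exact: (differentiable_derive_ln_comp oU twice_differentiable_det_hess det_hess_gt0).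
near=> z; rewrite first_koszulE //; near: z; exact: open_nbhs_nbhs.
Unshelve. all: by end_near. Qed.

Lemma log_det_hessC y i j : U y ->
  pd j (pd i (log_det_hess h)) y = pd i (pd j (log_det_hess h)) y.
Proof.
move=> Uy; rewrite /pd /log_det_hess.
exact: (derive_ln_compC oU twice_differentiable_det_hess det_hess_gt0 _ _ Uy).
Qed.

End HessianKoszul.

Lemma det_normal_kahler_metric {R : realType} {q : nat} (h : Rq R q -> R) (y xi : Rq R q) :
  \det (normal_kahler_metric h y xi) = (\det (hess_metric h y))%:C.
Proof.
have -> : normal_kahler_metric h y xi = map_mx (real_complex R) (hess_metric h y).
  by apply/matrixP => a b; rewrite !mxE.
by rewrite det_map_mx.
Qed.

Lemma dz_dzbar_fibre_const {R : realType} {q : nat} (i j : 'I_q)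
    (F : Rq R q -> R) (y xi : Rq R q) :
  dz_dzbar i j (fun y' _ => F y') y xi = (4^-1 * pd i (pd j F) y)%:C.
Proof.
have Dcst (c : R) (k : 'I_q) x : 'D_(ev k) ((fun=> c) : Rq R q -> R) x = 0.
  exact: derive_cst.
have DcstE (c : R) (k : 'I_q) : 'D_(ev k) ((fun=> c) : Rq R q -> R) = fun=> 0.
  by apply/funext => x; rewrite Dcst.
rewrite /dz_dzbar /pdy /pdxi /pd DcstE !Dcst.
rewrite (_ : (fun y' : Rq R q => 'D_(ev j) ((fun=> F y') : Rq R q -> R) xi) = fun=> 0).
  by rewrite Dcst subrr mulr0 !addr0 -rmorphM.
by apply/funext => y'; rewrite Dcst.
Qed.

Lemma kahler_ricci_normalE {R : realType} {q : nat} (h : Rq R q -> R)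
    (i j : 'I_q) (y xi : Rq R q) :
  kahler_ricci (normal_kahler_metric h) i j y xi
  = (- (4^-1 * pd i (pd j (log_det_hess h)) y))%:C.
Proof.
rewrite /kahler_ricci (_ : (fun y' xi' => _) = fun y' _ => log_det_hess h y').
  by rewrite dz_dzbar_fibre_const rmorphN.
by apply/funext => y'; apply/funext => xi'; rewrite det_normal_kahler_metric.
Qed.

Theorem proposition9 (R : realType) (q : nat) (U : set (Rq R q))
  (h : Rq R q -> R) :
  open U ->
  smooth_on U h ->
  (forall y, U y -> posdef (hess_metric h y)) ->
  forall (y xi : Rq R q) (i j : 'I_q), U y ->
    kahler_ricci (normal_kahler_metric h) i j y xi
    = (- (1 / 2) * second_koszul h y i j)%:C.
Proof.
move=> oU h_smooth h_posdef y xi i j Uy.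
rewrite kahler_ricci_normalE (second_koszulE oU h_smooth h_posdef) //.
rewrite (log_det_hessC oU h_smooth h_posdef) //.
by congr _%:C; field.
Qed.
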